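(* Let $M$ be a monoidal category which admits functorial inverses. Then for any choice of functorial inverses $i:M\to M$ there is a natural isomorphism $i^2(x)\cong x$.
   Context: A monoidal category $M$ admits functorial inverses if there exist a functor $i:M\to M$ and a natural isomorphism $x\otimes i(x)\cong 1$; a choice of functorial inverses is a specific such functor and natural isomorphism. *)

Set Implicit Arguments.
Unset Strict Implicit.

Record Category := {
  ob :> Type;
  hom : ob -> ob -> Type;
  idm : forall a, hom a a;
  comp : forall a b c, hom b c -> hom a b -> hom a c;
  comp_id_l : forall a b (f : hom a b), comp (idm b) f = f;
  comp_id_r : forall a b (f : hom a b), comp f (idm a) = f;
  comp_assoc : forall a b c d (h : hom c d) (g : hom b c) (f : hom a b),
      comp h (comp g f) = comp (comp h g) f
}.
Arguments idm {C} a : rename.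
Arguments comp {C a b c} _ _ : rename.
Arguments hom {C} _ _ : rename.

Definition is_iso (C : Category) (a b : C) (f : hom a b) : Prop :=
  exists g : hom b a, comp g f = idm a /\ comp f g = idm b.

Record Functor (C D : Category) := {
  fob :> C -> D;
  fmap : forall a b, hom a b -> hom (fob a) (fob b);
  fmap_id : forall a, fmap (idm a) = idm (fob a);
  fmap_comp : forall a b c (g : hom b c) (f : hom a b),
      fmap (comp g f) = comp (fmap g) (fmap f)
}.
Arguments fmap {C D} _ {a b} _.

Definition id_functor (C : Category) : Functor C C.
Proof.
  refine {| fob := fun x => x; fmap := fun a b f => f |}; reflexivity.
Defined.

Definition comp_functor (C D E : Category) (G : Functor D E) (F : Functor C D)
  : Functor C E.
Proof.
  refine {| fob := fun x => G (F x); fmap := fun a b f => fmap G (fmap F f) |}.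
  - intro a. rewrite !fmap_id. reflexivity.
  - intros a b c g f. rewrite !fmap_comp. reflexivity.
Defined.

Definition nat_iso_exists (C D : Category) (F G : Functor C D) : Prop :=
  exists alpha : forall x : C, hom (F x) (G x),
    (forall x, is_iso (alpha x)) /\
    (forall (x y : C) (f : hom x y),
        comp (alpha y) (fmap F f) = comp (fmap G f) (alpha x)).

Record MonoidalCategory := {
  mcat :> Category;
  tens : mcat -> mcat -> mcat;
  tensm : forall a b a' b', hom a a' -> hom b b' -> hom (tens a b) (tens a' b');
  tensm_id : forall a b, tensm (idm a) (idm b) = idm (tens a b);
  tensm_comp : forall a b a' b' a'' b''
      (f' : hom a' a'') (g' : hom b' b'') (f : hom a a') (g : hom b b'),
      tensm (comp f' f) (comp g' g) = comp (tensm f' g') (tensm f g);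
  munit : mcat;
  assoc : forall a b c, hom (tens (tens a b) c) (tens a (tens b c));
  assoc_iso : forall a b c, is_iso (assoc a b c);
  assoc_nat : forall a b c a' b' c' (f : hom a a') (g : hom b b') (h : hom c c'),
      comp (assoc a' b' c') (tensm (tensm f g) h)
      = comp (tensm f (tensm g h)) (assoc a b c);
  lunit : forall a, hom (tens munit a) a;
  lunit_iso : forall a, is_iso (lunit a);
  lunit_nat : forall a b (f : hom a b),
      comp (lunit b) (tensm (idm munit) f) = comp f (lunit a);
  runit : forall a, hom (tens a munit) a;
  runit_iso : forall a, is_iso (runit a);
  runit_nat : forall a b (f : hom a b),
      comp (runit b) (tensm f (idm munit)) = comp f (runit a);
  pentagon : forall a b c d,
      comp (assoc a b (tens c d)) (assoc (tens a b) c d)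
      = comp (tensm (idm a) (assoc b c d))
             (comp (assoc a (tens b c) d) (tensm (assoc a b c) (idm d)));
  triangle : forall a b,
      comp (tensm (idm a) (lunit b)) (assoc a munit b)
      = tensm (runit a) (idm b)
}.
Arguments tens {m} _ _.
Arguments tensm {m a b a' b'} _ _.
Arguments munit {m}.

(** A choice of functorial inverses: a functor [i : M -> M] together with a
    natural isomorphism [e : x ⊗ i(x) ≅ 1] (natural in x, the target being the
    constant functor at the unit, which sends every morphism to [idm 1]). *)
Arguments Functor : clear implicits.
Definition is_functorial_inverses (M : MonoidalCategory) (i : Functor M M)
  (e : forall x : M, hom (tens x (i x)) munit) : Prop :=
  (forall x, is_iso (e x)) /\
  (forall (x y : M) (f : hom x y),
      comp (e y) (tensm f (fmap i f)) = comp (idm munit) (e x)).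

Arguments is_functorial_inverses {M} i e.

Definition admits_functorial_inverses (M : MonoidalCategory) : Prop :=
  exists (i : Functor M M) (e : forall x : M, hom (tens x (i x)) munit),
    is_functorial_inverses i e.
Arguments comp_functor {C D E} G F.
Arguments id_functor C : assert.
Arguments nat_iso_exists {C D} F G.

(** The isomorphism [i (i x) ≅ x] is the composite
    [i(i x) ≅ 1 ⊗ i(i x) ≅ (x ⊗ i x) ⊗ i(i x) ≅ x ⊗ (i x ⊗ i(i x)) ≅ x ⊗ 1 ≅ x],
    using the counit [e] at [x] (inverted) and at [i x]. Each step is an
    isomorphism natural in [x], and naturality of the composite is obtained by
    pasting the five commuting squares. *)
From Stdlib Require Import ClassicalEpsilon.

Definition iso_inv {C : Category} {a b : C} {f : hom a b} (H : is_iso f) : hom b a :=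
  proj1_sig (constructive_indefinite_description _ H).

Lemma comp_iso_inv_l {C : Category} {a b : C} {f : hom a b} (H : is_iso f) :
  comp (iso_inv H) f = idm a.
Proof. exact (proj1 (proj2_sig (constructive_indefinite_description _ H))). Qed.

Lemma comp_iso_inv_r {C : Category} {a b : C} {f : hom a b} (H : is_iso f) :
  comp f (iso_inv H) = idm b.
Proof. exact (proj2 (proj2_sig (constructive_indefinite_description _ H))). Qed.

Lemma is_iso_inv {C : Category} {a b : C} {f : hom a b} (H : is_iso f) :
  is_iso (iso_inv H).
Proof. exists f; split; [apply comp_iso_inv_r | apply comp_iso_inv_l]. Qed.

Lemma is_iso_idm (C : Category) (a : C) : is_iso (idm a).
Proof. exists (idm a); split; apply comp_id_l. Qed.

Lemma is_iso_comp (C : Category) (a b c : C) (g : hom b c) (f : hom a b) :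
  is_iso g -> is_iso f -> is_iso (comp g f).
Proof.
  intros [g' [Hg'g Hgg']] [f' [Hf'f Hff']]. exists (comp f' g'); split.
  - rewrite <- comp_assoc, (comp_assoc g' g f), Hg'g, comp_id_l; exact Hf'f.
  - rewrite <- comp_assoc, (comp_assoc f f' g'), Hff', comp_id_l; exact Hgg'.
Qed.

Lemma is_iso_tensm (M : MonoidalCategory) (a b a' b' : M) (f : hom a a') (g : hom b b') :
  is_iso f -> is_iso g -> is_iso (tensm f g).
Proof.
  intros [f' [Hf'f Hff']] [g' [Hg'g Hgg']]. exists (tensm f' g'); split.
  - rewrite <- tensm_comp, Hf'f, Hg'g; apply tensm_id.
  - rewrite <- tensm_comp, Hff', Hgg'; apply tensm_id.
Qed.

Lemma comp_square (C : Category) (A1 B1 C1 A2 B2 C2 : C)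
  (p1 : hom A1 B1) (q1 : hom B1 C1) (p2 : hom A2 B2) (q2 : hom B2 C2)
  (u : hom A1 A2) (v : hom B1 B2) (w : hom C1 C2) :
  comp q2 v = comp w q1 -> comp p2 u = comp v p1 ->
  comp (comp q2 p2) u = comp w (comp q1 p1).
Proof.
  intros Hq Hp.
  rewrite <- comp_assoc, Hp, comp_assoc, Hq, comp_assoc; reflexivity.
Qed.

Lemma iso_inv_square {C : Category} {A1 B1 A2 B2 : C}
  {f1 : hom A1 B1} {f2 : hom A2 B2} (H1 : is_iso f1) (H2 : is_iso f2)
  {u : hom A1 A2} {v : hom B1 B2} :
  comp f2 u = comp v f1 -> comp (iso_inv H2) v = comp u (iso_inv H1).
Proof.
  intro Hsq.
  rewrite <- (comp_id_r (comp (iso_inv H2) v)), <- (comp_iso_inv_r H1), comp_assoc,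
    <- (comp_assoc (iso_inv H2) v f1), <- Hsq, comp_assoc, comp_iso_inv_l, comp_id_l.
  reflexivity.
Qed.

Section DoubleInverse.

Variable M : MonoidalCategory.
Variable i : Functor M M.
Variable e : forall x : M, hom (tens x (i x)) munit.
Hypothesis e_iso : forall x, is_iso (e x).
Hypothesis e_nat : forall (x y : M) (f : hom x y),
  comp (e y) (tensm f (fmap i f)) = comp (idm munit) (e x).

Definition double_inverse_iso (x : M) : hom (i (i x)) x :=
  comp (runit x)
    (comp (tensm (idm x) (e (i x)))
      (comp (assoc x (i x) (i (i x)))
        (comp (tensm (iso_inv (e_iso x)) (idm (i (i x))))
          (iso_inv (lunit_iso (i (i x))))))).

Lemma is_iso_double_inverse_iso (x : M) : is_iso (double_inverse_iso x).
Proof.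
  unfold double_inverse_iso.
  repeat apply is_iso_comp;
    auto using is_iso_tensm, is_iso_idm, is_iso_inv, runit_iso, assoc_iso.
Qed.

Section Squares.

Variables (x y : M) (f : hom x y).
Let h := fmap i f.
Let g := fmap i h.

Lemma lunit_inv_square :
  comp (iso_inv (lunit_iso (i (i y)))) g
  = comp (tensm (idm munit) g) (iso_inv (lunit_iso (i (i x)))).
Proof. apply iso_inv_square, lunit_nat. Qed.

Lemma counit_inv_square :
  comp (tensm (iso_inv (e_iso y)) (idm (i (i y)))) (tensm (idm munit) g)
  = comp (tensm (tensm f h) g) (tensm (iso_inv (e_iso x)) (idm (i (i x)))).
Proof.
  rewrite <- !tensm_comp, (iso_inv_square (e_iso x) (e_iso y) (e_nat _ _ f)).
  rewrite comp_id_l, comp_id_r; reflexivity.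
Qed.

Lemma counit_square :
  comp (tensm (idm y) (e (i y))) (tensm f (tensm h g))
  = comp (tensm f (idm munit)) (tensm (idm x) (e (i x))).
Proof. rewrite <- !tensm_comp, e_nat, !comp_id_l, comp_id_r; reflexivity. Qed.

Lemma double_inverse_iso_square :
  comp (double_inverse_iso y) g = comp f (double_inverse_iso x).
Proof.
  unfold double_inverse_iso.
  eapply comp_square; [apply runit_nat |].
  eapply comp_square; [apply counit_square |].
  eapply comp_square; [apply assoc_nat |].
  eapply comp_square; [apply counit_inv_square |].
  apply lunit_inv_square.
Qed.

End Squares.

End DoubleInverse.

Theorem lemma3p12 (M : MonoidalCategory) :
  admits_functorial_inverses M ->
  forall (i : Functor M M) (e : forall x : M, hom (tens x (i x)) munit),
    is_functorial_inverses i e ->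
    nat_iso_exists (comp_functor i i) (id_functor M).
Proof.
  intros _ i e [e_iso e_nat].
  exists (@double_inverse_iso M i e e_iso); split.
  - apply is_iso_double_inverse_iso.
  - intros x y f; apply double_inverse_iso_square, e_nat.
Qed.
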